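(* Let $R\in\mathbb{R}^{n\times d}$ have rows $x_1,\dots,x_n$ with $\|x_i\|_2\le B$, assumed centered, and let $\hat\Sigma_R=\frac1n R^\top R$ with eigenvalues $\lambda_1(\hat\Sigma_R)\ge\dots\ge\lambda_d(\hat\Sigma_R)$. Suppose $\mathrm{gap}_k(R):=\lambda_k(\hat\Sigma_R)-\lambda_{k+1}(\hat\Sigma_R)>0$. Then $$\mathrm{RS}_{P_k}(R)\le\frac{2\sqrt2\,B^2}{(n+1)\,\mathrm{gap}_k(R)}.$$
   Context: For a finite set of vectors $S$, $\hat\Sigma_S=\frac{1}{|S|}\sum_{x\in S}xx^\top$ (so $\hat\Sigma_{R\cup\{x\}}=\frac{1}{n+1}(\sum_{i}x_ix_i^\top+xx^\top)$). For a symmetric matrix $\Sigma$, $P_k(\Sigma)=V_kV_k^\top$ where $V_k$ contains orthonormal eigenvectors for the $k$ largest eigenvalues. The retain sensitivity of the rank-$k$ projector is $\mathrm{RS}_{P_k}(R)=\max_{x}\|P_k(\hat\Sigma_{R\cup\{x\}})-P_k(\hat\Sigma_R)\|_F$, the maximum over added points $x\in\mathbb{R}^d$ with $\|x\|_2\le B$. *)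

From mathcomp Require Import all_boot all_order all_algebra.
From mathcomp Require Import reals.
Set Implicit Arguments. Unset Strict Implicit. Unset Printing Implicit Defensive.
Import Order.TTheory GRing.Theory Num.Theory.
Local Open Scope ring_scope.

Section Defs.
Variable R : realType.

Definition vnorm (d : nat) (x : 'rV[R]_d) : R := Num.sqrt (\sum_j x 0 j ^+ 2).

Definition frob (m n : nat) (A : 'M[R]_(m, n)) : R :=
  Num.sqrt (\sum_i \sum_j A i j ^+ 2).

Definition emp_cov (n d : nat) (X : 'M[R]_(n, d)) : 'M[R]_d :=
  (n%:R)^-1 *: (X^T *m X).

Definition emp_cov_add (n d : nat) (X : 'M[R]_(n, d)) (x : 'rV[R]_d) : 'M[R]_d :=
  (n.+1%:R)^-1 *: (X^T *m X + x^T *m x).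

Definition sorted_eigendecomp (d : nat) (S V : 'M[R]_d) (lam : 'rV[R]_d) : Prop :=
  [/\ V^T *m V = 1%:M,
      S *m V = V *m diag_mx lam &
      forall i j : 'I_d, (i <= j)%N -> lam 0 j <= lam 0 i].

(* P_k built from such a decomposition: V_k V_k^T where V_k are the first k
   columns of V (eigenvectors of the k largest eigenvalues). *)
Definition topk_proj (d : nat) (k : nat) (V : 'M[R]_d) : 'M[R]_d :=
  \sum_(i < d | (i < k)%N) (col i V *m (col i V)^T).

(* lambda_j (1-indexed, j = 1..d) read off the sorted eigenvalue vector *)
Definition eigval (d : nat) (lam : 'rV[R]_d) (j : nat) : R :=
  nth 0 [seq lam 0 i | i <- enum 'I_d] j.-1.

Definition gapk (d : nat) (lam : 'rV[R]_d) (k : nat) : R :=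
  eigval lam k - eigval lam k.+1.

End Defs.

(* Multiplying by n and n+1 turns the problem into a rank-one update
   S' = S + x^T x of S = n Sigma_R.  For the eigenbases V of S and V' of S',
   the overlap W = V^T V' satisfies (mu_j - lam_i) W_ij = (x V)_i (x V')_j,
   and Weyl monotonicity (S <= S' in the Loewner order) gives mu_j >= lam_j,
   so mu_j - lam_i >= n gap_k whenever j < k <= i.  Since
   ||P_k(S') - P_k(S)||_F^2 = 2 sum_{i >= k, j < k} W_ij^2 and
   ||x V|| = ||x V'|| = ||x||, this yields
   ||P_k(S') - P_k(S)||_F <= sqrt 2 ||x||^2 / (n gap_k), and n + 1 <= 2 n
   gives the stated bound. *)

From mathcomp Require Import all_boot all_order all_algebra.
From mathcomp Require Import reals.
From mathcomp Require Import ring lra zify.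
Set Implicit Arguments. Unset Strict Implicit. Unset Printing Implicit Defensive.
Import Order.TTheory GRing.Theory Num.Theory.
Local Open Scope ring_scope.

Section PartialIdentity.
Variable R : pzRingType.

Lemma mulmx_pid_mxE m n r (A : 'M[R]_(m, n)) i j :
  (A *m pid_mx r) i j = A i j *+ (j < r)%N.
Proof.
rewrite mxE (bigD1 j) //= mxE eqxx /= mulr_natr big1 ?addr0 // => l /negbTE nlj.
by rewrite mxE val_eqE nlj mulr0.
Qed.

Lemma pid_mx_mulmxE m n r (A : 'M[R]_(m, n)) i j :
  (pid_mx r *m A) i j = A i j *+ (i < r)%N.
Proof.
rewrite mxE (bigD1 i) //= mxE eqxx /= mulr_natl big1 ?addr0 // => l /negbTE nli.
by rewrite mxE eq_sym val_eqE nli mul0r.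
Qed.

Lemma mulmx_copid_mxE m n r (A : 'M[R]_(m, n)) i j :
  (A *m copid_mx r) i j = A i j *+ (r <= j)%N.
Proof.
by rewrite mulmxBr mulmx1 2!mxE mulmx_pid_mxE; case: ltnP; rewrite ?subrr ?subr0.
Qed.

End PartialIdentity.

Section OrthogonalBasis.
Variable R : comPzRingType.

Definition quad_form d (S : 'M[R]_d) (v : 'rV[R]_d) : R := (v *m S *m v^T) 0 0.

Lemma sum_sqr_rowE d (v : 'rV[R]_d) : \sum_j v 0 j ^+ 2 = (v *m v^T) 0 0.
Proof. by rewrite !mxE; apply: eq_bigr => j _; rewrite !mxE expr2. Qed.

Lemma sum_sqr_mulmx_orthogonal d (U : 'M[R]_d) (a : 'rV[R]_d) :
  U *m U^T = 1%:M -> \sum_j (a *m U) 0 j ^+ 2 = \sum_j a 0 j ^+ 2.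
Proof.
by move=> UU; rewrite !sum_sqr_rowE trmx_mul !mulmxA -(mulmxA a) UU mulmx1.
Qed.

Lemma eigendecomp_quadE d (S V : 'M[R]_d) (lam a : 'rV[R]_d) :
  V^T *m V = 1%:M -> S *m V = V *m diag_mx lam ->
  quad_form S (a *m V^T) = \sum_j a 0 j ^+ 2 * lam 0 j.
Proof.
move=> VV SV; rewrite /quad_form trmx_mul trmxK -!mulmxA (mulmxA S) SV.
rewrite !mulmxA -(mulmxA a) VV mulmx1 mul_mx_diag !mxE.
by apply: eq_bigr => j _; rewrite !mxE; ring.
Qed.

Lemma trmx_mul_eigendecomp d (S V : 'M[R]_d) (lam : 'rV[R]_d) :
  V^T *m V = 1%:M -> S *m V = V *m diag_mx lam ->
  V^T *m S = diag_mx lam *m V^T.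
Proof.
move=> VV SV; have -> : S = V *m diag_mx lam *m V^T.
  by rewrite -SV -mulmxA (mulmx1C VV) mulmx1.
by rewrite !mulmxA VV mul1mx.
Qed.

Lemma eigendecomp_overlapE d (S S' V V' : 'M[R]_d) (lam mu : 'rV[R]_d) i j :
  V^T *m V = 1%:M -> S *m V = V *m diag_mx lam ->
  S' *m V' = V' *m diag_mx mu ->
  (mu 0 j - lam 0 i) * (V^T *m V') i j = (V^T *m (S' - S) *m V') i j.
Proof.
move=> VV SV SV'.
rewrite mulmxBr mulmxBl -mulmxA SV' mulmxA (trmx_mul_eigendecomp VV SV).
by rewrite -[diag_mx lam *m _ *m _]mulmxA mul_mx_diag mul_diag_mx !mxE mulrBl mulrC.
Qed.

Lemma sum_sqr_mxE m n (M : 'M[R]_(m, n)) :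
  \sum_i \sum_j M i j ^+ 2 = \tr (M *m M^T).
Proof.
by apply: eq_bigr => i _; rewrite !mxE; apply: eq_bigr => j _; rewrite !mxE expr2.
Qed.

Lemma sum_sqr_mx_orthogonal_conj d (U U' M : 'M[R]_d) :
  U *m U^T = 1%:M -> U' *m U'^T = 1%:M ->
  \sum_i \sum_j (U^T *m M *m U') i j ^+ 2 = \sum_i \sum_j M i j ^+ 2.
Proof.
move=> UU UU'; rewrite !sum_sqr_mxE !trmx_mul trmxK !mulmxA.
rewrite -(mulmxA _ U') UU' mulmx1 mxtrace_mulC !mulmxA.
by rewrite UU mul1mx.
Qed.

Lemma sum_sqr_cross_blocks d (k : nat) (W : 'M[R]_d) :
  W *m W^T = 1%:M -> W^T *m W = 1%:M ->
  \sum_(i < d | (i < k)%N) \sum_(j < d | (k <= j)%N) W i j ^+ 2 =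
  \sum_(i < d | (k <= i)%N) \sum_(j < d | (j < k)%N) W i j ^+ 2.
Proof.
(* Both sides equal k - sum_{i, j < k} W_ij^2, since the rows and the
   columns of W are unit vectors. *)
move=> WWt WtW.
have split_row (A : 'M[R]_d) (i : 'I_d) : A *m A^T = 1%:M ->
    \sum_(j < d | (k <= j)%N) A i j ^+ 2 = 1 - \sum_(j < d | (j < k)%N) A i j ^+ 2.
  move=> AAt; have row1 : \sum_j A i j ^+ 2 = 1.
    have := congr1 (fun M : 'M[R]_d => M i i) AAt; rewrite !mxE eqxx mulr1n => <-.
    by apply: eq_bigr => j _; rewrite !mxE expr2.
  rewrite -row1 [X in _ = X - _](bigID (fun j : 'I_d => (j < k)%N)) /=.
  rewrite addrAC subrr add0r.
  by apply: eq_bigl => j; rewrite leqNgt.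
rewrite (eq_bigr _ (fun i _ => split_row W i WWt)) sumrB [RHS]exchange_big /=.
have WtWtt : W^T *m W^T^T = 1%:M by rewrite trmxK.
rewrite [RHS](eq_bigr _ (fun j _ => etrans _ (split_row W^T j WtWtt))); last first.
  by move=> j _; apply: eq_bigr => i _; rewrite mxE.
rewrite sumrB [X in _ = _ - X]exchange_big /=; congr (_ - _).
by apply: eq_bigr => i _; apply: eq_bigr => j _; rewrite mxE.
Qed.

Lemma sum_sqr_commutator_pid d (k : nat) (W : 'M[R]_d) :
  W *m W^T = 1%:M -> W^T *m W = 1%:M ->
  \sum_i \sum_j (W *m pid_mx k - pid_mx k *m W) i j ^+ 2 =
  (\sum_(i < d | (k <= i)%N) \sum_(j < d | (j < k)%N) W i j ^+ 2) *+ 2.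
Proof.
move=> WWt WtW.
have entryE i j : (W *m pid_mx k - pid_mx k *m W) i j ^+ 2 =
    if (i < k)%N != (j < k)%N then W i j ^+ 2 else 0.
  rewrite mxE mulmx_pid_mxE mxE pid_mx_mulmxE.
  case: (ltnP i k) => _; case: (ltnP j k) => _;
    by rewrite /= ?mulr1n ?mulr0n ?subrr ?subr0 ?sub0r ?sqrrN ?expr0n.
under eq_bigr do under eq_bigr do rewrite entryE.
rewrite (bigID (fun i : 'I_d => (i < k)%N)) /= mulr2n addrC; congr (_ + _).
  apply: eq_big => [i|i /negbTE ik]; first by rewrite -leqNgt.
  by rewrite [RHS]big_mkcond; apply: eq_bigr => j _; rewrite ik /= negbK.
rewrite -sum_sqr_cross_blocks //; apply: eq_bigr => i ik.
by rewrite [RHS]big_mkcond; apply: eq_bigr => j _; rewrite ik /= -leqNgt.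
Qed.

End OrthogonalBasis.

Section CommonDirection.
Variable F : fieldType.

Lemma common_direction d (U U' : 'M[F]_d) (i : 'I_d) :
  U \in unitmx -> U' \in unitmx ->
  exists a b : 'rV[F]_d,
    a *m (pid_mx i.+1 : 'M_d) != 0 /\ a *m pid_mx i.+1 *m U = b *m copid_mx i *m U'.
Proof.
(* The first i+1 rows of U and the last d-i rows of U' span subspaces whose
   dimensions add up to d+1, so these subspaces meet. *)
move=> uU uU'; set A := (pid_mx i.+1 : 'M_d) *m U; set B := copid_mx i *m U'.
have rankA : \rank A = i.+1.
  by rewrite mxrankMfree ?row_free_unit ?rank_pid_mx.
have rankB : \rank B = (d - i)%N.
  by rewrite mxrankMfree ?row_free_unit ?rank_copid_mx // ltnW.
have : (A :&: B)%MS != 0.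
  rewrite -mxrank_eq0; apply/eqP => rank0.
  have := mxrank_sum_cap A B; have := rank_leq_col (A + B)%MS.
  rewrite rankA rankB rank0; have := ltn_ord i; lia.
rewrite -nz_row_eq0; set v := nz_row _ => v_nz.
have /submxP[a va] : (v <= A)%MS := submx_trans (nz_row_sub _) (capmxSl _ _).
have /submxP[b vb] : (v <= B)%MS := submx_trans (nz_row_sub _) (capmxSr _ _).
exists a, b; split; last by rewrite -!mulmxA -va -vb.
by apply: contraNneq v_nz => a0; rewrite va mulmxA a0 mul0mx.
Qed.

End CommonDirection.

Lemma sum_sqr_row_gt0 (R : realDomainType) d (v : 'rV[R]_d) :
  v != 0 -> 0 < \sum_j v 0 j ^+ 2.
Proof.
move=> v_nz; rewrite lt_def sumr_ge0 ?andbT => [|j _]; last exact: sqr_ge0.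
apply: contra v_nz => /eqP sum0; apply/eqP/rowP => j; rewrite mxE.
have /eqP := psumr_eq0P (fun l _ => sqr_ge0 (v 0 l)) sum0 (i := j) isT.
by rewrite sqrf_eq0 => /eqP.
Qed.

Lemma sumr_filter_le (R : numDomainType) (I : finType) (P : pred I) (F : I -> R) :
  (forall i, 0 <= F i) -> \sum_(i | P i) F i <= \sum_i F i.
Proof. by move=> F_ge0; rewrite [leRHS](bigID P) /= lerDl sumr_ge0. Qed.

Lemma quad_form_le_add_rank_one (R : realDomainType) d (S : 'M[R]_d) (x v : 'rV[R]_d) :
  quad_form S v <= quad_form (S + x^T *m x) v.
Proof.
rewrite /quad_form mulmxDr mulmxDl [leRHS]mxE lerDl.
have -> : v *m (x^T *m x) *m v^T = v *m x^T *m (v *m x^T)^T.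
  by rewrite trmx_mul trmxK !mulmxA.
by rewrite -sum_sqr_rowE sumr_ge0 // => j _; apply: sqr_ge0.
Qed.

Section EigenvalueMonotonicity.
Variable R : realType.

Lemma quad_form_ge_top d (S V : 'M[R]_d) lam (a : 'rV[R]_d) (i : 'I_d) :
  sorted_eigendecomp S V lam -> a *m pid_mx i.+1 = a ->
  lam 0 i * \sum_j a 0 j ^+ 2 <= quad_form S (a *m V^T).
Proof.
move=> [VV SV lam_sorted] aP; rewrite (eigendecomp_quadE _ VV SV) mulr_sumr.
apply: ler_sum => j _; rewrite -aP mulmx_pid_mxE mulrC.
case: ltnP => ji; last by rewrite mulr0n expr0n !mul0r.
by rewrite ler_wpM2l ?sqr_ge0 ?lam_sorted.
Qed.

Lemma quad_form_le_bottom d (S V : 'M[R]_d) lam (b : 'rV[R]_d) (i : 'I_d) :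
  sorted_eigendecomp S V lam -> b *m copid_mx i = b ->
  quad_form S (b *m V^T) <= lam 0 i * \sum_j b 0 j ^+ 2.
Proof.
move=> [VV SV lam_sorted] bP; rewrite (eigendecomp_quadE _ VV SV) mulr_sumr.
apply: ler_sum => j _; rewrite -bP mulmx_copid_mxE [leRHS]mulrC.
case: leqP => ij; last by rewrite mulr0n expr0n !mul0r.
by rewrite ler_wpM2l ?sqr_ge0 ?lam_sorted.
Qed.

Lemma eigval_le_of_quad_form_le d (S S' V V' : 'M[R]_d) (lam mu : 'rV[R]_d) :
  sorted_eigendecomp S V lam -> sorted_eigendecomp S' V' mu ->
  (forall v, quad_form S v <= quad_form S' v) ->
  forall i, lam 0 i <= mu 0 i.
Proof.
move=> eS eS' le_SS' i; have [[VV _ _] [VV' _ _]] := (eS, eS').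
have [uV _] := mulmx1_unit VV; have [uV' _] := mulmx1_unit VV'.
have [a [b [a_nz eab]]] := common_direction i uV uV'.
set a' := a *m _ in a_nz eab; set b' := b *m _ in eab.
have a'P : a' *m pid_mx i.+1 = a' by rewrite -mulmxA pid_mx_id.
have b'P : b' *m copid_mx i = b' by rewrite -mulmxA copid_mx_id // ltnW.
have normE : \sum_j b' 0 j ^+ 2 = \sum_j a' 0 j ^+ 2.
  rewrite -(@sum_sqr_mulmx_orthogonal _ _ V'^T) ?trmxK // -eab.
  by rewrite sum_sqr_mulmx_orthogonal ?trmxK.
rewrite -(ler_pM2r (sum_sqr_row_gt0 a_nz)).
apply: le_trans (quad_form_ge_top eS a'P) _.
by rewrite eab -normE; apply: le_trans (le_SS' _) (quad_form_le_bottom eS' b'P).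
Qed.

End EigenvalueMonotonicity.

Section RankOneUpdate.
Variable R : realType.

Lemma topk_projE d k (V : 'M[R]_d) : topk_proj k V = V *m pid_mx k *m V^T.
Proof.
apply/matrixP => a b; rewrite summxE mxE big_mkcond /=.
apply: eq_bigr => i _; rewrite mulmx_pid_mxE !mxE big_ord1 !mxE.
by case: ltnP; rewrite ?mulr1n ?mulr0n ?mul0r.
Qed.

Lemma frob_topk_proj_sub d k (V V' : 'M[R]_d) :
  V^T *m V = 1%:M -> V'^T *m V' = 1%:M ->
  frob (topk_proj k V' - topk_proj k V) =
  Num.sqrt ((\sum_(i < d | (k <= i)%N) \sum_(j < d | (j < k)%N)
               (V^T *m V') i j ^+ 2) *+ 2).
Proof.
move=> VV VV'; have VVt := mulmx1C VV; have VVt' := mulmx1C VV'.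
set W := V^T *m V'.
have WWt : W *m W^T = 1%:M.
  by rewrite /W trmx_mul trmxK !mulmxA -(mulmxA _ V' V'^T) VVt' mulmx1 VV.
have WtW : W^T *m W = 1%:M.
  by rewrite /W trmx_mul trmxK !mulmxA -(mulmxA _ V V^T) VVt mulmx1 VV'.
rewrite /frob -(sum_sqr_mx_orthogonal_conj _ VVt VVt') -sum_sqr_commutator_pid //.
suff -> : V^T *m (topk_proj k V' - topk_proj k V) *m V' =
          W *m pid_mx k - pid_mx k *m W by [].
rewrite !topk_projE mulmxBr mulmxBl !mulmxA -(mulmxA _ V'^T V') VV' mulmx1 VV mul1mx.
by rewrite -(mulmxA (pid_mx k)).
Qed.

Lemma vnorm_sqr d (x : 'rV[R]_d) : vnorm x ^+ 2 = \sum_j x 0 j ^+ 2.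
Proof. by rewrite sqr_sqrtr // sumr_ge0 // => j _; apply: sqr_ge0. Qed.

Lemma cross_block_overlap_le d k (S V V' : 'M[R]_d)
    (lam mu x : 'rV[R]_d) (g : R) :
  sorted_eigendecomp S V lam -> sorted_eigendecomp (S + x^T *m x) V' mu ->
  0 <= g -> (forall i j : 'I_d, (j < k <= i)%N -> g <= lam 0 j - lam 0 i) ->
  (\sum_(i < d | (k <= i)%N) \sum_(j < d | (j < k)%N) (V^T *m V') i j ^+ 2) * g ^+ 2
    <= (vnorm x ^+ 2) ^+ 2.
Proof.
move=> eS eS' g_ge0 gap; have [[VV SV _] [VV' SV' _]] := (eS, eS').
have lam_le_mu := eigval_le_of_quad_form_le eS eS' (quad_form_le_add_rank_one S x).
set y := x *m V; set z := x *m V'.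
have overlapE i j : (mu 0 j - lam 0 i) * (V^T *m V') i j = y 0 i * z 0 j.
  rewrite (eigendecomp_overlapE _ _ VV SV SV') (addrC S) addrK !mulmxA -trmx_mul.
  by rewrite -mulmxA mxE big_ord1 mxE.
have entry_le (i j : 'I_d) : (j < k <= i)%N ->
    (V^T *m V') i j ^+ 2 * g ^+ 2 <= y 0 i ^+ 2 * z 0 j ^+ 2.
  move=> jki; rewrite -[leRHS]exprMn -overlapE exprMn mulrC ler_wpM2r ?sqr_ge0 //.
  have gap_le : g <= mu 0 j - lam 0 i.
    by have := gap i j jki; have := lam_le_mu j; lra.
  by rewrite !expr2 ler_pM.
rewrite mulr_suml; apply: le_trans (_ : \sum_(i < d | (k <= i)%N)
    \sum_(j < d | (j < k)%N) y 0 i ^+ 2 * z 0 j ^+ 2 <= _).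
  apply: ler_sum => i ki; rewrite mulr_suml; apply: ler_sum => j jk.
  by apply: entry_le; rewrite jk ki.
rewrite -big_distrlr /= expr2 vnorm_sqr.
rewrite -{1}(sum_sqr_mulmx_orthogonal x (mulmx1C VV)).
rewrite -(sum_sqr_mulmx_orthogonal x (mulmx1C VV')).
by apply: ler_pM; rewrite ?sumr_ge0 ?sumr_filter_le // => *; apply: sqr_ge0.
Qed.

Lemma frob_topk_proj_rank_one_update d k (S V V' : 'M[R]_d)
    (lam mu x : 'rV[R]_d) (g : R) :
  sorted_eigendecomp S V lam -> sorted_eigendecomp (S + x^T *m x) V' mu ->
  0 < g -> (forall i j : 'I_d, (j < k <= i)%N -> g <= lam 0 j - lam 0 i) ->
  frob (topk_proj k V' - topk_proj k V) <= Num.sqrt 2 * vnorm x ^+ 2 / g.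
Proof.
move=> eS eS' g_gt0 gap; have [[VV _ _] [VV' _ _]] := (eS, eS').
have bound := cross_block_overlap_le eS eS' (ltW g_gt0) gap.
have ratio_ge0 : 0 <= vnorm x ^+ 2 / g by rewrite divr_ge0 ?sqr_ge0 ?ltW.
rewrite frob_topk_proj_sub // -mulrA -(ger0_norm ratio_ge0) -sqrtr_sqr -sqrtrM //.
rewrite ler_wsqrtr // -mulr_natl ler_wpM2l // expr_div_n ler_pdivlMr //.
exact: exprn_gt0.
Qed.

End RankOneUpdate.

Lemma ler_mul_div_natS (R : realFieldType) n (a b c : R) :
  (0 < n)%N -> 0 <= a -> a <= b -> 0 < c ->
  a / (n%:R * c) <= 2 * b / (n.+1%:R * c).
Proof.
move=> n_gt0 a_ge0 ab c_gt0.
have n_ge1 : 1 <= n%:R :> R by rewrite ler1n.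
have nc_gt0 : 0 < n%:R * c by rewrite mulr_gt0 ?ltr0n.
apply: (le_trans (y := b / (n%:R * c))); first by rewrite ler_pM2r ?invr_gt0.
have -> : 2 * b / (n.+1%:R * c) = b / (n%:R * c) * (2 * n%:R / n.+1%:R).
  by field; rewrite !lt0r_neq0 //; lra.
apply: ler_peMr; first by rewrite divr_ge0 ?(le_trans a_ge0 ab) ?(ltW nc_gt0).
by rewrite ler_pdivlMr ?ltr0n // -natr1; lra.
Qed.

Section EmpiricalCovariance.
Variable R : realType.

Lemma sorted_eigendecompZ d (S V : 'M[R]_d) (lam : 'rV[R]_d) (c : R) :
  0 <= c -> sorted_eigendecomp S V lam ->
  sorted_eigendecomp (c *: S) V (c *: lam).
Proof.
move=> c_ge0 [VV SV lam_sorted]; split=> //.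
  by rewrite -scalemxAl SV linearZ /= scalemxAr.
by move=> i j ij; rewrite !mxE ler_wpM2l ?lam_sorted.
Qed.

Lemma scale_emp_cov n d (X : 'M[R]_(n, d)) : n%:R *: emp_cov X = X^T *m X.
Proof.
case: n X => [|n] X; last by rewrite /emp_cov scalerA mulfV ?scale1r ?pnatr_eq0.
by rewrite scale0r; apply/matrixP => i j; rewrite !mxE big_ord0.
Qed.

Lemma scale_emp_cov_add n d (X : 'M[R]_(n, d)) (x : 'rV[R]_d) :
  n.+1%:R *: emp_cov_add X x = n%:R *: emp_cov X + x^T *m x.
Proof. by rewrite /emp_cov_add scalerA mulfV ?scale1r ?pnatr_eq0 // scale_emp_cov. Qed.

Lemma gapk_le_sub d k (lam : 'rV[R]_d) (i j : 'I_d) :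
  (forall i j : 'I_d, (i <= j)%N -> lam 0 j <= lam 0 i) -> (j < k <= i)%N ->
  gapk lam k <= lam 0 j - lam 0 i.
Proof.
move=> lam_sorted /andP[jk ki].
have eigvalE l (ld : (l < d)%N) : eigval lam l.+1 = lam 0 (Ordinal ld).
  rewrite /eigval /= (nth_map (Ordinal ld)) ?size_enum_ord //.
  by rewrite -[l]/(val (Ordinal ld)) nth_ord_enum.
have km1d : (k.-1 < d)%N by have := ltn_ord i; lia.
have kd : (k < d)%N by have := ltn_ord i; lia.
have lam_j : lam 0 (Ordinal km1d) <= lam 0 j by apply: lam_sorted => /=; lia.
have lam_i : lam 0 i <= lam 0 (Ordinal kd) by apply: lam_sorted.
have k_gt0 : (0 < k)%N by lia.
by rewrite /gapk -{1}(prednK k_gt0) (eigvalE _ km1d) (eigvalE _ kd); lra.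
Qed.

End EmpiricalCovariance.

Theorem mainTheorem9 (RR : realType) (n d k : nat) (B : RR)
    (X : 'M[RR]_(n, d)) (V : 'M[RR]_d) (lam : 'rV[RR]_d) :
  (0 < n)%N -> (0 < k)%N -> (k < d)%N ->
  (forall i : 'I_n, vnorm (row i X) <= B) ->
  \sum_(i < n) row i X = 0 ->
  sorted_eigendecomp (emp_cov X) V lam ->
  0 < gapk lam k ->
  forall (x : 'rV[RR]_d) (V' : 'M[RR]_d) (lam' : 'rV[RR]_d),
    vnorm x <= B ->
    sorted_eigendecomp (emp_cov_add X x) V' lam' ->
    frob (topk_proj k V' - topk_proj k V)
      <= 2 * Num.sqrt 2 * B ^+ 2
         / (n.+1%:R * (gapk lam k)).
Proof.
(* Only the added point enters the bound: the rows of X need neither be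
   bounded nor centered. *)
move=> n_gt0 _ _ _ _ eX g_gt0 x V' lam' x_le_B eXx.
set g := gapk lam k in g_gt0 *.
have eS := sorted_eigendecompZ (ler0n RR n) eX.
have := sorted_eigendecompZ (ler0n RR n.+1) eXx; rewrite scale_emp_cov_add => eS'.
have gapS (i j : 'I_d) :
    (j < k <= i)%N -> n%:R * g <= (n%:R *: lam) 0 j - (n%:R *: lam) 0 i.
  by move=> jki; rewrite !mxE -mulrBr ler_wpM2l ?ler0n ?gapk_le_sub //; case: eX.
have ng_gt0 : 0 < n%:R * g by rewrite mulr_gt0 ?ltr0n.
apply: le_trans (frob_topk_proj_rank_one_update eS eS' ng_gt0 gapS) _.
have x_sqr_le : vnorm x ^+ 2 <= B ^+ 2.
  by rewrite ler_sqr ?nnegrE ?sqrtr_ge0 // (le_trans _ x_le_B) ?sqrtr_ge0.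
have -> : 2 * Num.sqrt 2 * B ^+ 2 / (n.+1%:R * g) =
    Num.sqrt 2 * (2 * B ^+ 2 / (n.+1%:R * g)) by ring.
rewrite -mulrA ler_wpM2l ?sqrtr_ge0 //.
exact: ler_mul_div_natS (sqr_ge0 _) x_sqr_le g_gt0.
Qed.
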